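(* Let $\mathcal{N}$ be a sound deterministic negotiation, let $\pi$ be a local path of $\mathcal{N}$, and let $n_0$ be the first node of $\pi$. Then $\pi$ is realizable from every reachable configuration that enables $n_0$.
   Context: A negotiation is a tuple $\mathcal{N}=(\mathit{Proc},N,\mathit{dom},R,\delta)$ where $\mathit{Proc}$ is a finite set of processes, $N$ is a finite set of nodes, $\mathit{dom}:N\to 2^{\mathit{Proc}}\setminus\{\emptyset\}$, there are two distinguished nodes $n_{\mathit{init}},n_{\mathit{fin}}$ with $\mathit{dom}(n_{\mathit{init}})=\mathit{dom}(n_{\mathit{fin}})=\mathit{Proc}$, $R$ is a set of results, each node $n$ has a set $\mathit{out}(n)\subseteq R$ of results (nonempty for $n\neq n_{\mathit{fin}}$), and $\delta(n,a,p)\subseteq N$ is defined and nonempty exactly when $a\in\mathit{out}(n)$ and $p\in\mathit{dom}(n)$, with $p\in\mathit{dom}(n')$ for all $n'\in\delta(n,a,p)$. A configuration is a map $C$ assigning to each process a nonempty set of nodes; $C_{\mathit{init}}(p)=\{n_{\mathit{init}}\}$, $C_{\mathit{fin}}(p)=\{n_{\mathit{fin}}\}$. A node $n$ is enabled in $C$ if $n\in C(p)$ for all $p\in\mathit{dom}(n)$. If $n$ is enabled in $C$ and $a\in\mathit{out}(n)$, then $C\xrightarrow{(n,a)}C'$ where $C'(p)=\delta(n,a,p)$ for $p\in\mathit{dom}(n)$ and $C'(p)=C(p)$ otherwise. A run from $C_1$ is a sequence $(n_1,a_1)(n_2,a_2)\cdots$ with $C_1\xrightarrow{(n_1,a_1)}C_2\xrightarrow{(n_2,a_2)}\cdots$;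 a configuration is reachable if some finite run from $C_{\mathit{init}}$ leads to it; a successful run is a finite run from $C_{\mathit{init}}$ to $C_{\mathit{fin}}$. $\mathcal{N}$ is sound if every finite run from $C_{\mathit{init}}$ can be extended to a successful run. The graph of $\mathcal{N}$ has vertex set $N$ and edges $n\xrightarrow{p,a}n'$ whenever $n'\in\delta(n,a,p)$; a local path is a path in this graph. $\mathcal{N}$ is deterministic if every $\delta(n,a,p)$ is a singleton. For a run $v$, $\mathit{dom}(v)$ is the union of $\mathit{dom}(n)$ over all $(n,a)$ occurring in $v$. A local path $n_0\xrightarrow{p_0,a_0}n_1\cdots\xrightarrow{p_{k-1},a_{k-1}}n_k$ is realizable from a configuration $C$ if there is a run $C\xrightarrow{(n_0,a_0)}C_0'\xrightarrow{w_1}C_1\xrightarrow{(n_1,a_1)}C_1'\cdots C_{k-1}\xrightarrow{(n_{k-1},a_{k-1})}C_{k-1}'\xrightarrow{w_k}C_k$ such that $p_i\notin\mathit{dom}(w_{i+1})$ for all $i=0,\dots,k-1$. *)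

From mathcomp Require Import all_boot.
Set Implicit Arguments. Unset Strict Implicit. Unset Printing Implicit Defensive.

(* A negotiation over finite types of processes, nodes and results.
   delta n a p = set0 encodes "undefined". *)
Record negotiation (Proc Node Res : finType) := Negotiation {
  dom : Node -> {set Proc};
  n_init : Node;
  n_fin : Node;
  out : Node -> {set Res};
  delta : Node -> Res -> Proc -> {set Node}
}.

Section Neg.
Variables (Proc Node Res : finType) (N : negotiation Proc Node Res).

Definition wf_negotiation : Prop :=
  (forall n, dom N n != set0) /\
  dom N (n_init N) = [set: Proc] /\
  dom N (n_fin N) = [set: Proc] /\
  (forall n, n != n_fin N -> out N n != set0) /\
  (forall n a p, (delta N n a p != set0) = (a \in out N n) && (p \in dom N n)) /\
  (forall n a p n', n' \in delta N n a p -> p \in dom N n').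

Definition config := Proc -> {set Node}.

Definition C_init : config := fun _ => [set n_init N].

Definition is_final (C : config) : Prop := forall p, C p = [set n_fin N].

Definition enabled (C : config) (n : Node) : bool :=
  [forall p in dom N n, n \in C p].

Definition upd (C : config) (n : Node) (a : Res) : config :=
  fun p => if p \in dom N n then delta N n a p else C p.

Fixpoint exec (C : config) (w : seq (Node * Res)) : option config :=
  match w with
  | [::] => Some C
  | (n, a) :: w' => if enabled C n && (a \in out N n) then exec (upd C n a) w' else None
  end.

Definition reachable (C : config) : Prop := exists w, exec C_init w = Some C.

Definition sound : Prop :=
  forall w C, exec C_init w = Some C ->
    exists v C', exec C v = Some C' /\ is_final C'.

Definition deterministic : Prop :=
  forall n a p, a \in out N n -> p \in dom N n -> #|delta N n a p| = 1.

Definition dom_run (w : seq (Node * Res)) : {set Proc} :=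
  \bigcup_(x <- w) dom N x.1.

(* local path n0 -p0,a0-> n1 -p1,a1-> ... encoded as start node n0 and
   the list of edges (p_i, a_i, n_{i+1}) *)
Fixpoint local_path (n : Node) (es : seq (Proc * Res * Node)) : Prop :=
  match es with
  | [::] => True
  | (p, a, n') :: es' => n' \in delta N n a p /\ local_path n' es'
  end.

Fixpoint realizable (C : config) (n : Node) (es : seq (Proc * Res * Node)) : Prop :=
  match es with
  | [::] => True
  | (p, a, n') :: es' =>
      exists (w : seq (Node * Res)) (C' : config),
        exec C ((n, a) :: w) = Some C' /\ p \notin dom_run w /\ realizable C' n' es'
  end.

End Neg.

From mathcomp Require Import all_boot.
Set Implicit Arguments.
Unset Strict Implicit.

(* After the step (n0, a), determinism pins process p to the single node n'.
   Soundness gives a run from there to the final configuration; cut it just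
   before the first step involving p.  Up to that point p stays at n', so that
   step can only be n' itself, which is therefore enabled; and if p is never
   involved, then n' = n_fin, which is enabled in the final configuration.
   The resulting configuration is again reachable, so induction on the path
   continues. *)

Section Runs.
Variables (Proc Node Res : finType) (N : negotiation Proc Node Res).
Implicit Types (C : config Proc Node) (w : seq (Node * Res)).

Lemma exec_cat C w1 w2 :
  exec N C (w1 ++ w2) = obind (fun C' => exec N C' w2) (exec N C w1).
Proof.
elim: w1 C => [|[n a] w1 IH] C //=.
by case: (enabled N C n && (a \in out N n)).
Qed.

Lemma dom_run_nil : dom_run N [::] = set0.
Proof. by rewrite /dom_run big_nil. Qed.

Lemma dom_run_cons x w : dom_run N (x :: w) = dom N x.1 :|: dom_run N w.
Proof. by rewrite /dom_run big_cons. Qed.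

Lemma reachable_exec C w C' :
  reachable N C -> exec N C w = Some C' -> reachable N C'.
Proof. by move=> [v Hv] Hw; exists (v ++ w); rewrite exec_cat Hv. Qed.

Lemma final_enabled C p n' :
  is_final N C -> C p = [set n'] -> enabled N C n'.
Proof.
move=> Cfin Cp; have -> : n' = n_fin N.
  by apply/set1P; rewrite -(Cfin p) Cp set11.
by apply/forall_inP => q _; rewrite Cfin set11.
Qed.

Lemma run_to_enabled_avoiding C v Cf p n' :
  exec N C v = Some Cf -> is_final N Cf -> C p = [set n'] ->
  exists u C1, [/\ exec N C u = Some C1, p \notin dom_run N u & enabled N C1 n'].
Proof.
elim: v C => [|[m b] v IH] C /=.
  move=> [<-] Cfin Cp; exists [::], C.
  by rewrite dom_run_nil inE; split=> //; apply: final_enabled Cfin Cp.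
case Hstep: (enabled N C m && (b \in out N m)) => // Hv Cfin Cp.
have [pm | pNm] := boolP (p \in dom N m).
  have m_n' : m = n'.
    by case/andP: Hstep => /forall_inP /(_ p pm); rewrite Cp => /set1P.
  exists [::], C; rewrite dom_run_nil inE -m_n'.
  by case/andP: Hstep.
have [|u [C1 [Hu pNu HC1]]] := IH _ Hv Cfin; first by rewrite /upd (negbTE pNm).
exists ((m, b) :: u), C1; split=> //=; first by rewrite Hstep.
by rewrite dom_run_cons inE negb_or pNm.
Qed.

Lemma deterministic_step n a p n' :
  wf_negotiation N -> deterministic N -> n' \in delta N n a p ->
  [/\ a \in out N n, p \in dom N n & delta N n a p = [set n']].
Proof.
move=> [_ [_ [_ [_ [delta_def _]]]]] det n'_in.
have : delta N n a p != set0 by apply/set0Pn; exists n'.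
rewrite delta_def => /andP [a_out p_dom]; split=> //.
have [x Hx] := cards1P (introT eqP (det _ _ _ a_out p_dom)).
by move: n'_in; rewrite Hx => /set1P ->.
Qed.

End Runs.

Theorem lemma3p1 (Proc Node Res : finType) (N : negotiation Proc Node Res) :
  wf_negotiation N -> sound N -> deterministic N ->
  forall (n0 : Node) (es : seq (Proc * Res * Node)),
    local_path N n0 es ->
    forall C : config Proc Node, reachable N C -> enabled N C n0 ->
      realizable N C n0 es.
Proof.
move=> wfN soundN detN n0 es.
elim: es n0 => [|[[p a] n'] es IH] n0 //= [n'_in path_es] C reachC en_n0.
have [a_out p_dom delta_n'] := deterministic_step wfN detN n'_in.
set C0 := upd N C n0 a.
have step_n0 : exec N C [:: (n0, a)] = Some C0 by rewrite /= en_n0 a_out.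
have reachC0 : reachable N C0 := reachable_exec reachC step_n0.
have [v [Cf [Hv Cfin]]] : exists v Cf, exec N C0 v = Some Cf /\ is_final N Cf.
  by case: reachC0 => w Hw; apply: soundN Hw.
have C0p : C0 p = [set n'] by rewrite /C0 /upd p_dom.
have [u [C1 [Hu pNu en_n']]] := run_to_enabled_avoiding Hv Cfin C0p.
exists u, C1; split; first by rewrite /= en_n0 a_out.
split=> //; apply: IH => //.
exact: reachable_exec reachC0 Hu.
Qed.
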